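(* Assume $p=0$ (no equality constraints). Let $\mathbf x\in\Omega$ satisfy the SCQ and let $\mathbf d\in\mathcal T^H_\Omega(\mathbf x)$. Then there exists $\epsilon>0$ such that for all $\mathbf y\in\mathcal B(\mathbf x,\epsilon)$, all $\mathbf w\in\mathcal B(\mathbf d,\epsilon)$ and all $t\in(0,\epsilon)$, $$c^{int}(\mathbf y+t\mathbf w)\le c^{int}(\mathbf y)\quad\text{and}\quad c^{ext}(\mathbf y+t\mathbf w)\le c^{ext}(\mathbf y).$$
   Context: Consider the problem of minimizing $f(\mathbf x)$ over $\mathbf x\in\mathbb R^n$ subject to $g_\ell(\mathbf x)\le 0$ ($\ell=1,\dots,m$), with $f,g_\ell:\mathbb R^n\to\mathbb R\cup\{+\infty\}$ (no equality constraints). The index set $\{1,\dots,m\}$ is partitioned into disjoint sets $\mathcal G^{int}$ and $\mathcal G^{ext}$. Define $\Omega^{int}=\{\mathbf x: g_\ell(\mathbf x)\le 0\ \forall\ell\in\mathcal G^{int}\}$, $\Omega^{ext}=\{\mathbf x: g_\ell(\mathbf x)\le0\ \forall \ell\in\mathcal G^{ext}\}$, $\Omega=\Omega^{int}\cap\Omega^{ext}$. Let $\phi^{prox}(\mathbf x)=\max_{\ell\in\mathcal G^{int}}g_\ell(\mathbf x)$; $c^{int}(\mathbf x)=-\prod_{\ell\in\mathcal G^{int}}\min\{1,-g_\ell(\mathbf x)\}$ if $g_\ell(\mathbf x)\le0$ for all $\ell\in\mathcal G^{int}$, and $c^{int}(\mathbf x)=\phi^{prox}(\mathbf x)$ otherwise;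 $c^{ext}(\mathbf x)=\sum_{\ell\in\mathcal G^{ext}}(\max\{0,g_\ell(\mathbf x)\})^2$. $\mathcal B(\mathbf x,\epsilon)$ denotes the ball of radius $\epsilon$ centred at $\mathbf x$. Clarke generalized directional derivative: $c^\circ(\mathbf x;\mathbf d)=\limsup_{\mathbf y\to\mathbf x,\ t\searrow0}\frac{c(\mathbf y+t\mathbf d)-c(\mathbf y)}{t}$. Hypertangent cone: $\mathbf d$ is hypertangent to $\Omega$ at $\mathbf x$ if there is $\epsilon>0$ with $\mathbf y+t\mathbf w\in\Omega$ for all $\mathbf y\in\Omega\cap\mathcal B(\mathbf x,\epsilon)$, $\mathbf w\in\mathcal B(\mathbf d,\epsilon)$, $t\in(0,\epsilon)$; $\mathcal T^H_\Omega(\mathbf x)$ is the set of such vectors. Stationarity constraint qualification (SCQ): a point $\mathbf x\in\Omega$ satisfies SCQ if (a) $c^{int}$ and $c^{ext}$ are Lipschitz continuous near $\mathbf x$; (b) $(c^{int})^\circ(\mathbf x;\mathbf d)<0$ for every $\mathbf d\in\mathcal T^H_\Omega(\mathbf x)$; (c) for every $\mathbf d\in\mathcal T^H_\Omega(\mathbf x)$ there is $\epsilon>0$ such that $(c^{ext})^\circ(\mathbf y;\mathbf d)<0$ for all $\mathbf y\in\mathcal B(\mathbf x,\epsilon)\setminus\Omega^{ext}$. *)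

From HB Require Import structures.
From mathcomp Require Import all_boot all_order all_algebra.
From mathcomp Require Import all_classical all_reals ereal.
Set Implicit Arguments. Unset Strict Implicit. Unset Printing Implicit Defensive.
Import Order.TTheory GRing.Theory Num.Theory.
Local Open Scope classical_set_scope.
Local Open Scope ring_scope.

Section Defs.
Variables (R : realType) (n m : nat).
Notation vec := 'rV[R]_n.

Definition enorm (v : vec) : R := Num.sqrt (\sum_(i < n) (v ord0 i) ^+ 2).
Definition eball (c : vec) (e : R) (y : vec) : Prop := enorm (y - c) < e.

Variables (g : 'I_m -> vec -> \bar R) (Gint : {set 'I_m}).
Definition Gext : {set 'I_m} := ~: Gint.

Definition Omega_int (x : vec) : Prop := forall l, l \in Gint -> (g l x <= 0)%E.
Definition Omega_ext (x : vec) : Prop := forall l, l \in Gext -> (g l x <= 0)%E.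
Definition Omega (x : vec) : Prop := Omega_int x /\ Omega_ext x.

Definition phi_prox (x : vec) : \bar R := \big[maxe/-oo%E]_(l in Gint) g l x.

Definition c_int (x : vec) : \bar R :=
  if `[< Omega_int x >] then
    (- \big[mule/1%E]_(l in Gint) mine 1%E (- g l x))%E
  else phi_prox x.

Definition c_ext (x : vec) : \bar R :=
  (\sum_(l in Gext) (maxe 0%E (g l x) * maxe 0%E (g l x)))%E.

Definition clarke (c : vec -> \bar R) (x d : vec) : \bar R :=
  ereal_inf [set ereal_sup [set q | exists y t, eball x e y /\ 0 < t < e /\
                               q = ((c (y + t *: d)%R - c y) * (t^-1)%:E)%E]
            | e in [set e : R | 0 < e]].

Definition lipschitz_near (c : vec -> \bar R) (x : vec) : Prop :=
  exists e L : R, 0 < e /\ forall y z, eball x e y -> eball x e z ->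
    c y \is a fin_num /\ c z \is a fin_num /\
    `|fine (c y) - fine (c z)| <= L * enorm (y - z).

Definition hypertangent (x d : vec) : Prop :=
  exists e : R, 0 < e /\ forall y w t, Omega y -> eball x e y -> eball d e w ->
    0 < t < e -> Omega (y + t *: w).

Definition SCQ (x : vec) : Prop :=
  Omega x /\
  (lipschitz_near c_int x /\ lipschitz_near c_ext x) /\
  (forall d, hypertangent x d -> (clarke c_int x d < 0)%E) /\
  (forall d, hypertangent x d -> exists e : R, 0 < e /\
     forall y, eball x e y -> ~ Omega_ext y -> (clarke c_ext y d < 0)%E).
End Defs.

From HB Require Import structures.
From mathcomp Require Import all_boot all_order all_algebra.
From mathcomp Require Import all_classical all_reals ereal.
From mathcomp Require Import ring lra.
Import Order.TTheory GRing.Theory Num.Theory.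
Local Open Scope classical_set_scope.
Local Open Scope ring_scope.
Set Implicit Arguments. Unset Strict Implicit. Unset Printing Implicit Defensive.

(* The device is local descent: [c (u + tau v) <= c u] for all [u] near [z]
   and all small [tau >= 0].  A negative Clarke derivative gives it in a fixed
   direction, and it survives convex combinations of directions (shrinking the
   neighbourhood).  Since hypertangent cones are open, the [2n] directions
   [d +- r e_j] are hypertangent, and their convex hull contains a cube around
   [d]; so condition (b) of the SCQ makes [c_int] descend from [x] uniformly
   in all [w] near [d], without using its Lipschitz continuity.  Condition (c)
   gives descent of [c_ext] only outside [Omega_ext], i.e. where [c_ext > 0].
   On a segment [y + s w] the Lipschitz function [s |-> c_ext (y + s w)] then
   cannot end above its initial value: at the first parameter where it reaches
   its final value it still decreases to the left. *)

Section Norm1.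
Variables (R : realType) (n : nat).
Notation vec := 'rV[R]_n.

Definition norm1 (v : vec) : R := \sum_(i < n) `|v 0 i|.

Lemma norm1_ge0 (v : vec) : 0 <= norm1 v.
Proof. by apply: sumr_ge0 => i _. Qed.

Lemma enorm_ge0 (v : vec) : 0 <= enorm v.
Proof. exact: sqrtr_ge0. Qed.

Lemma norm1D (a b : vec) : norm1 (a + b) <= norm1 a + norm1 b.
Proof. by rewrite -big_split; apply: ler_sum => i _; rewrite mxE ler_normD. Qed.

Lemma norm1Z (k : R) (a : vec) : norm1 (k *: a) = `|k| * norm1 a.
Proof. by rewrite /norm1 mulr_sumr; apply: eq_bigr => i _; rewrite mxE normrM. Qed.

Lemma norm1_delta (i : 'I_n) : norm1 (delta_mx 0 i) = 1.
Proof.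
rewrite /norm1 (bigD1 i) //= big1 ?addr0; first by rewrite mxE !eqxx normr1.
by move=> j /negbTE ji; rewrite mxE ji andbF normr0.
Qed.

Lemma enorm_le_norm1 (v : vec) : enorm v <= norm1 v.
Proof.
have [sq_le ge0] : \sum_(i < n) v 0 i ^+ 2 <= norm1 v ^+ 2 /\ 0 <= norm1 v.
  rewrite /norm1; elim/big_rec2: _ => [|i s1 s2 _ [le_s ge0]]; first by rewrite expr0n.
  split; last by rewrite addr_ge0.
  rewrite sqrrD -real_normK ?num_real // -addrA lerD2l (le_trans le_s) // lerDr.
  by rewrite mulrn_wge0 // mulr_ge0.
by rewrite /enorm -(ger0_norm ge0) -sqrtr_sqr ler_sqrt // sqr_ge0.
Qed.

Lemma coord_le_enorm (v : vec) i : `|v 0 i| <= enorm v.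
Proof.
rewrite /enorm -sqrtr_sqr ler_sqrt; last by apply: sumr_ge0 => j _; rewrite sqr_ge0.
by rewrite (bigD1 i) //= lerDl; apply: sumr_ge0 => j _; rewrite sqr_ge0.
Qed.

Lemma norm1_le_enorm (v : vec) : norm1 v <= n%:R * enorm v.
Proof.
apply: (le_trans (ler_sum _ (fun i _ => coord_le_enorm v i))).
by rewrite sumr_const card_ord mulr_natl.
Qed.

End Norm1.

Lemma lte_quot0_le (R : realType) (a b : \bar R) (t : R) :
  0 < t -> ((a - b) * (t^-1)%:E < 0)%E -> (a <= b)%E.
Proof.
move=> t0; case: a => [a| |]; case: b => [b| |] //=; rewrite ?leey ?leNye //.
- rewrite -EFinM lte_fin lee_fin pmulr_llt0 ?invr_gt0 // subr_lt0; exact: ltW.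
- by rewrite gt0_mulye ?lte_fin ?invr_gt0.
- by rewrite gt0_mulye ?lte_fin ?invr_gt0.
- by rewrite gt0_mulye ?lte_fin ?invr_gt0.
Qed.

Lemma exists_pos_forall (I : finType) (R : realType) (P : I -> R -> Prop) :
  (forall i a b, 0 < a -> a <= b -> P i b -> P i a) ->
  (forall i, exists e, 0 < e /\ P i e) ->
  exists e, 0 < e /\ forall i, P i e.
Proof.
move=> P_down P_ex.
suff [e [e0 Pe]] : exists e, 0 < e /\ forall i, i \in enum I -> P i e.
  by exists e; split => // i; apply: Pe; rewrite mem_enum.
elim: (enum I) => [|j s [e [e0 Pe]]]; first by exists 1.
have [f [f0 Pf]] := P_ex j.
have ef0 : 0 < Order.min e f by rewrite lt_min e0 f0.
exists (Order.min e f); split => // i; rewrite inE => /orP [/eqP -> | i_s].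
  by apply: (P_down _ _ f) => //; rewrite ge_min lexx orbT.
by apply: (P_down _ _ e) => //; [rewrite ge_min lexx | exact: Pe].
Qed.

Section Descent.
Variables (R : realType) (n : nat) (c : 'rV[R]_n -> \bar R).
Notation vec := 'rV[R]_n.

Definition descent_near (z v : vec) (e : R) : Prop :=
  forall u tau, norm1 (u - z) < e -> 0 <= tau < e -> (c (u + tau *: v) <= c u)%E.

Lemma descent_near_le (z v : vec) (e e' : R) :
  e' <= e -> descent_near z v e -> descent_near z v e'.
Proof.
move=> e'e dsc u tau uz /andP [tau0 taue]; apply: dsc.
  exact: lt_le_trans e'e.
by rewrite tau0 (lt_le_trans taue).
Qed.

Lemma descent_near0 (z : vec) (e : R) : descent_near z 0 e.
Proof. by move=> u tau _ _; rewrite scaler0 addr0. Qed.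

Lemma descent_nearZ (z v : vec) (e k : R) :
  0 <= k <= 1 -> descent_near z v e -> descent_near z (k *: v) e.
Proof.
move=> /andP [k0 k1] dsc u tau uz /andP [tau0 taue]; rewrite scalerA; apply: dsc => //.
by rewrite mulr_ge0 //= (le_lt_trans _ taue) // ler_piMr.
Qed.

(* After the step along [a] the point is still in the ball where descent
   along [b] holds. *)
Lemma descent_nearD (z a b : vec) (e M : R) : 0 < e -> 0 <= M -> norm1 a <= M ->
  descent_near z a e -> descent_near z b e -> descent_near z (a + b) (e / (1 + M)).
Proof.
move=> e0 M0 aM dsc_a dsc_b u tau uz /andP [tau0 taue].
have M1 : 0 < 1 + M by lra.
have le_e : e / (1 + M) <= e by rewrite ler_pdivrMr // ler_peMr //; lra.
have tauM : tau * M <= e / (1 + M) * M by rewrite ler_wpM2r // ltW.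
have e_split : e / (1 + M) + e / (1 + M) * M = e.
  by rewrite -{1}(mulr1 (e / _)) -mulrDr mulrAC -mulrA divff ?mulr1 // gt_eqF.
have tau_e : 0 <= tau < e by rewrite tau0 (lt_le_trans taue).
rewrite scalerDr addrA (le_trans _ (dsc_a _ _ (lt_le_trans uz le_e) tau_e)) //.
apply: dsc_b tau_e; rewrite addrAC (le_lt_trans (norm1D _ _)) // norm1Z ger0_norm //.
have : tau * norm1 a <= tau * M by rewrite ler_wpM2l.
lra.
Qed.

Lemma descent_near_sum (z : vec) (I : Type) (s : seq I) (F : I -> vec) (e B : R) :
  0 < e -> 0 <= B -> (forall i, norm1 (F i) <= B) ->
  (forall i, descent_near z (F i) e) ->
  descent_near z (\sum_(i <- s) F i) (e / (1 + B) ^+ size s).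
Proof.
move=> e0 B0 FB dscF; have B1 : 1 <= 1 + B by lra.
elim: s => [|i s IH]; first by rewrite big_nil; exact: descent_near0.
rewrite big_cons /= exprSr invfM mulrA.
have es0 : 0 < e / (1 + B) ^+ size s by rewrite divr_gt0 // exprn_gt0 //; lra.
apply: descent_nearD => //; apply: descent_near_le (dscF i).
by rewrite ler_pdivrMr ?exprn_gt0 ?ler_peMr ?exprn_ege1 //; lra.
Qed.

Lemma clarke_lt0_descent_near (z v : vec) :
  (clarke c z v < 0)%E -> exists e, 0 < e /\ descent_near z v e.
Proof.
move=> /ereal_inf_lt [_ [e e0 <-] sup_lt0].
exists e; split => // u tau uz /andP [tau0 taue].
have [->|tau_neq0] := eqVneq tau 0; first by rewrite scale0r addr0.
have tau_gt0 : 0 < tau by rewrite lt_def tau_neq0.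
apply: (lte_quot0_le tau_gt0); apply: le_lt_trans sup_lt0.
apply: ereal_sup_ubound; exists u, tau; split; last by rewrite tau_gt0.
exact: le_lt_trans (enorm_le_norm1 _) uz.
Qed.

End Descent.

Section Cube.
Variables (R : realType) (n : nat).
Notation vec := 'rV[R]_n.

Definition axis_step (d : vec) (r : R) (j : 'I_n) (b : bool) : vec :=
  d + (if b then r else - r) *: delta_mx 0 j.

Definition in_cube (d : vec) (a : R) (w : vec) : Prop :=
  forall j, `|(w - d) 0 j| <= a.

Lemma in_cube_enorm (d w : vec) (a : R) : enorm (w - d) <= a -> in_cube d a w.
Proof. by move=> wd j; apply: le_trans (coord_le_enorm _ _) wd. Qed.

Lemma norm1_axis_step_sub (d : vec) (r : R) j b :
  0 <= r -> norm1 (axis_step d r j b - d) = r.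
Proof.
move=> r0; rewrite /axis_step addrAC subrr add0r norm1Z norm1_delta mulr1.
by case: b; rewrite ?normrN ger0_norm.
Qed.

Lemma norm1_axis_step (d : vec) (r : R) j b :
  0 <= r -> norm1 (axis_step d r j b) <= norm1 d + r.
Proof.
move=> r0; have := norm1D d (axis_step d r j b - d).
by rewrite (addrC d) subrK norm1_axis_step_sub.
Qed.

(* The cube of half-side [r/n] around [d] lies in the convex hull of the
   [2n] points [d +- r e_j]; coordinate [j] of [w - d] is carried by the
   pair of vertices on axis [j], with total weight [1/n]. *)
Lemma cube_convex_decomp (d w : vec) (r : R) :
  0 < r -> (0 < n)%N -> in_cube d (r / n%:R) w ->
  exists a b : 'I_n -> R, (forall j, [/\ 0 <= a j, 0 <= b j & a j + b j <= 1]) /\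
    w = \sum_(j < n) (a j *: axis_step d r j true + b j *: axis_step d r j false).
Proof.
move=> r0 n0 w_cube; have n_gt0 : 0 < n%:R :> R by rewrite ltr0n.
have inv_n_le1 : n%:R^-1 <= 1 :> R by rewrite invr_le1 ?ler1n ?unitf_gt0.
have inv_n_gt0 : 0 < n%:R^-1 :> R by rewrite invr_gt0.
pose q j := (w - d) 0 j / r.
have q_le j : `|q j| <= n%:R^-1.
  by rewrite normrM normfV (gtr0_norm r0) ler_pdivrMr // mulrC; exact: w_cube.
pose a j := (n%:R^-1 + q j) / 2; pose b j := (n%:R^-1 - q j) / 2.
exists a, b; split.
  by move=> j; have := q_le j; rewrite ler_norml /a /b => /andP [? ?]; split; lra.
have vertex_pair j : a j *: axis_step d r j true + b j *: axis_step d r j false =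
    n%:R^-1 *: d + (w - d) 0 j *: delta_mx 0 j.
  by apply/rowP => k; rewrite /a /b /q /axis_step !mxE; field; rewrite !gt_eqF.
under eq_bigr do rewrite vertex_pair.
rewrite big_split /= sumr_const card_ord -scaler_nat scalerA mulfV ?gt_eqF //.
by rewrite scale1r -row_sum_delta addrC subrK.
Qed.

End Cube.

Section CubeDescent.
Variables (R : realType) (n : nat) (c : 'rV[R]_n -> \bar R).
Hypothesis n_gt0 : (0 < n)%N.
Notation vec := 'rV[R]_n.

Lemma descent_near_cube (z d : vec) (r e : R) : 0 < r -> 0 < e ->
  (forall j b, descent_near c z (axis_step d r j b) e) ->
  exists e', 0 < e' /\ forall w, in_cube d (r / n%:R) w -> descent_near c z w e'.
Proof.
move=> r0 e0 dsc_step; set B := norm1 d + r.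
have B0 : 0 <= B by rewrite addr_ge0 ?norm1_ge0 ?ltW.
have eB0 : 0 < e / (1 + B) by rewrite divr_gt0 //; lra.
exists (e / (1 + B) / (1 + B) ^+ size (index_enum 'I_n)).
split; first by rewrite divr_gt0 // exprn_gt0 //; lra.
move=> w /(cube_convex_decomp r0 n_gt0) [a [b [ab_ge0 ->]]].
have scaled_step (k : R) j s : 0 <= k <= 1 ->
    norm1 (k *: axis_step d r j s) <= k * B /\
    descent_near c z (k *: axis_step d r j s) e.
  move=> k01; split; last exact: descent_nearZ k01 (dsc_step j s).
  have /andP [k0 _] := k01.
  by rewrite norm1Z ger0_norm // ler_wpM2l // norm1_axis_step // ltW.
have weights j : [/\ 0 <= a j <= 1, 0 <= b j <= 1 & a j + b j <= 1].
  by have [a0 b0 ab1] := ab_ge0 j; rewrite a0 b0; split => //; lra.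
apply: descent_near_sum => // [j|j]; have [a1 b1 ab1] := weights j;
  have [na da] := scaled_step _ j true a1; have [nb db] := scaled_step _ j false b1.
- by apply: (le_trans (norm1D _ _)); nra.
- by apply: descent_nearD => //; apply: le_trans na _; rewrite ler_piMl //; lra.
Qed.

Lemma clarke_lt0_descent_cube (z d : vec) (r : R) : 0 < r ->
  (forall j b, (clarke c z (axis_step d r j b) < 0)%E) ->
  exists e, 0 < e /\ forall w, in_cube d (r / n%:R) w -> descent_near c z w e.
Proof.
move=> r0 clarke_lt0.
have [e [e0 dsc]] : exists e, 0 < e /\
    forall p : 'I_n * bool, descent_near c z (axis_step d r p.1 p.2) e.
  apply: exists_pos_forall => [p e1 e2 _ e12|[j b]]; first exact: descent_near_le e12.
  exact: clarke_lt0_descent_near.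
exact: (descent_near_cube r0 e0 (fun j b => dsc (j, b))).
Qed.

Lemma clarke_lt0_descent_ball (x d : vec) (r : R) : 0 < r ->
  (forall j b, (clarke c x (axis_step d r j b) < 0)%E) ->
  exists e, 0 < e /\ forall y w t, eball x e y -> eball d e w -> 0 < t < e ->
    (c (y + t *: w) <= c y)%E.
Proof.
move=> r0 /(clarke_lt0_descent_cube r0) [e [e0 desc]].
have n1 : 1 <= n%:R :> R by rewrite ler1n.
pose eps := Order.min (e / n%:R) (r / n%:R).
have [eps_e eps_r] : eps <= e / n%:R /\ eps <= r / n%:R by rewrite !ge_min !lexx orbT.
have en_e : e / n%:R <= e by rewrite ler_pdivrMr ?ltr0n //; nra.
exists eps; split => [|y w t xy dw /andP [t0 te]]; first by rewrite lt_min !divr_gt0 ?ltr0n.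
apply: desc (in_cube_enorm (ltW (lt_le_trans dw eps_r))) _ _ _ _.
  apply: le_lt_trans (norm1_le_enorm _) _.
  by rewrite -ltr_pdivlMl ?ltr0n // mulrC (lt_le_trans xy).
by rewrite (ltW t0) (lt_le_trans te) // (le_trans eps_e).
Qed.

End CubeDescent.

(* Look at the least [v] with [f t <= f v]: the Lipschitz bound keeps [v]
   in this superlevel set, and local descent to the left of [v] contradicts
   its minimality unless [f t <= f 0]. *)
Lemma lipschitz_descent_le (R : realType) (f : R -> R) (t K : R) : 0 < t -> 0 < K ->
  (forall s s', 0 <= s <= t -> 0 <= s' <= t -> `|f s - f s'| <= K * `|s - s'|) ->
  (forall s, 0 < s <= t -> f 0 < f s ->
     exists h0, 0 < h0 /\ forall h, 0 < h -> h < h0 -> h < s -> f s <= f (s - h)) ->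
  f t <= f 0.
Proof.
move=> t0 K0 f_lip f_desc; rewrite leNgt; apply/negP => f0t.
pose B := [set s | 0 <= s <= t /\ f t <= f s].
have Bt : B t by split; rewrite ?lexx ?ltW.
have B_ge0 : lbound B 0 by move=> s [/andP []].
have B_inf : has_inf B by split; [exists t | exists 0].
pose v := inf B.
have v0 : 0 <= v by apply: lb_le_inf => //; exists t.
have vt : v <= t := ge_inf (proj2 B_inf) Bt.
have ftv : f t <= f v.
  rewrite leNgt; apply/negP => fvt.
  have gap0 : 0 < (f t - f v) / K by rewrite divr_gt0 // subr_gt0.
  have [s Bs sv] := inf_adherent gap0 B_inf.
  have [/andP [s0 st] fts] := Bs; have vs : v <= s := ge_inf (proj2 B_inf) Bs.
  have lip_sv : f s - f v <= K * (s - v).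
    have := f_lip s v; rewrite s0 st v0 vt [`|s - v|]ger0_norm ?subr_ge0 //.
    by move=> /(_ isT isT); apply: le_trans (ler_norm _).
  have : K * (s - v) < f t - f v by rewrite mulrC -ltr_pdivlMr //; lra.
  lra.
have v_gt0 : 0 < v by rewrite lt_def v0 andbT; apply: contraTneq ftv => ->; rewrite -ltNge.
have [h0 [h00 desc_v]] := f_desc v ltac:(by rewrite v_gt0 vt) (lt_le_trans f0t ftv).
have min_gt0 : 0 < Order.min h0 v by rewrite lt_min h00 v_gt0.
pose h := Order.min h0 v / 2.
have h_gt0 : 0 < h by rewrite divr_gt0.
have [hh0 hv] : h < h0 /\ h < v.
  have : h < Order.min h0 v by rewrite /h ltr_pdivrMr // ltr_pMr // ltr1n.
  by rewrite lt_min => /andP.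
have B_vh : B (v - h).
  by split; [apply/andP; split; lra | exact: le_trans ftv (desc_v h h_gt0 hh0 hv)].
have := ge_inf (proj2 B_inf) B_vh; rewrite -/v; lra.
Qed.

Section Segment.
Variables (R : realType) (n : nat) (c : 'rV[R]_n -> \bar R).
Notation vec := 'rV[R]_n.

Lemma eball_segment (x y d w : vec) (e s : R) : e <= 1 ->
  eball x e y -> eball d e w -> 0 <= s < e ->
  eball x (e * (2 * n%:R + norm1 d + 1)) (y + s *: w).
Proof.
move=> e1 xy dw /andP [s0 se]; rewrite /eball in xy dw *.
have e0 : 0 < e := le_lt_trans (enorm_ge0 _) xy.
have n0 : 0 <= n%:R :> R := ler0n _ n.
have near_y : norm1 (y - x) <= n%:R * e.
  by rewrite (le_trans (norm1_le_enorm _)) // ler_wpM2l // ltW.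
have bound_w : norm1 w <= norm1 d + n%:R.
  rewrite -[w](subrK d) addrC (le_trans (norm1D _ _)) // lerD2l.
  by rewrite (le_trans (norm1_le_enorm _)) // ler_piMr // (le_trans (ltW dw)).
have step_w : s * norm1 w <= e * (norm1 d + n%:R).
  by rewrite ler_pM ?norm1_ge0 // ltW.
rewrite (le_lt_trans (enorm_le_norm1 _)) // addrAC (le_lt_trans (norm1D _ _)) //.
rewrite norm1Z ger0_norm //; lra.
Qed.

Lemma segment_descent (x y w : vec) (e L t : R) : 0 < t ->
  (forall u v, eball x e u -> eball x e v -> c u \is a fin_num /\
     c v \is a fin_num /\ `|fine (c u) - fine (c v)| <= L * enorm (u - v)) ->
  (forall s, 0 <= s <= t -> eball x e (y + s *: w)) ->
  (forall s, 0 < s <= t -> (c y < c (y + s *: w))%E ->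
     exists e', 0 < e' /\ descent_near c (y + s *: w) w e') ->
  (c (y + t *: w) <= c y)%E.
Proof.
move=> t0 c_lip seg_ball seg_desc.
pose f s := fine (c (y + s *: w)).
have c_f s : 0 <= s <= t -> c (y + s *: w) = (f s)%:E.
  by move=> /seg_ball ball_s; have [fin_s _] := c_lip _ _ ball_s ball_s; rewrite fineK.
have seg0 : (0 : R) <= 0 <= t by rewrite lexx ltW.
have segt : (0 : R) <= t <= t by rewrite lexx ltW.
have c_y : c y = (f 0)%:E by rewrite -c_f // scale0r addr0.
rewrite c_y c_f // lee_fin.
apply: (@lipschitz_descent_le _ f t (`|L| * norm1 w + 1)) => //.
- by rewrite ltr_pwDr ?mulr_ge0 ?norm1_ge0.
- move=> s s' s_seg s'_seg.
  have [_ [_]] := c_lip _ _ (seg_ball _ s_seg) (seg_ball _ s'_seg).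
  rewrite opprD addrACA subrr add0r -scalerBl => lip_ss'.
  have := enorm_le_norm1 ((s - s') *: w); rewrite norm1Z => le_n.
  have := enorm_ge0 ((s - s') *: w); have := ler_norm L.
  have := norm1_ge0 w; have := normr_ge0 (s - s'); have := normr_ge0 L.
  rewrite /f; nra.
- move=> s s_pos f0s; have /andP [s0 st] := s_pos.
  have s_seg : 0 <= s <= t by rewrite ltW.
  have [e' [e'0 desc]] := seg_desc s s_pos ltac:(by rewrite c_y c_f // lte_fin).
  have nw1 : 0 < 1 + norm1 w by have := norm1_ge0 w; lra.
  exists (e' / (1 + norm1 w)); split => [|h h0 he' hs]; first by rewrite divr_gt0.
  have he'' : h * (1 + norm1 w) < e' by rewrite -ltr_pdivlMr.
  have step_back : y + (s - h) *: w + h *: w = y + s *: w by rewrite -addrA -scalerDl subrK.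
  have := desc (y + (s - h) *: w) h; rewrite step_back c_f // c_f; last first.
    by rewrite subr_ge0 ltW //= (le_trans _ st) // lerBlDr lerDl ltW.
  rewrite lee_fin; apply.
    rewrite opprD addrACA subrr add0r -scalerBl norm1Z.
    have -> : s - h - s = - h by lra.
    rewrite normrN gtr0_norm //; have := norm1_ge0 w; nra.
  by rewrite ltW //=; have := norm1_ge0 w; nra.
Qed.

End Segment.

Section Constraints.
Variables (R : realType) (n m : nat) (g : 'I_m -> 'rV[R]_n -> \bar R) (Gint : {set 'I_m}).
Notation vec := 'rV[R]_n.

Lemma hypertangent_open (x d : vec) : hypertangent g Gint x d ->
  exists r, 0 < r /\ forall v, norm1 (v - d) < r -> hypertangent g Gint x v.
Proof.
move=> [e [e0 ht_d]]; exists (e / 2); split => [|v vd]; first by rewrite divr_gt0.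
have n0 : 0 <= n%:R :> R := ler0n _ n.
have n1 : 0 < n%:R + 1 :> R by lra.
pose e' := e / 2 / (n%:R + 1).
have e'0 : 0 < e' by rewrite !divr_gt0.
have e'e : e' <= e / 2.
  by rewrite /e' ler_pdivrMr // ler_peMr ?divr_ge0 //; lra.
have e'n : (n%:R + 1) * e' = e / 2 by rewrite mulrC divfK // gt_eqF.
exists e'; split => // y w t Oy xy vw /andP [t0 te].
apply: ht_d => //; rewrite /eball in xy vw *.
- by apply: (lt_le_trans xy); lra.
- rewrite (le_lt_trans (enorm_le_norm1 _)) // -(subrK v w) -addrA.
  rewrite (le_lt_trans (norm1D _ _)) // (le_lt_trans (lerD (norm1_le_enorm _) (lexx _))) //.
  have : n%:R * enorm (w - v) <= n%:R * e' by rewrite ler_wpM2l // ltW.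
  nra.
- by rewrite t0 /=; lra.
Qed.

Lemma lt_c_ext_not_Omega_ext (y z : vec) :
  (c_ext g Gint y < c_ext g Gint z)%E -> ~ Omega_ext g Gint z.
Proof.
move=> lt_yz Oz; move: lt_yz; rewrite ltNge => /negP; apply.
rewrite [X in (X <= _)%E]big1 => [|l l_ext]; last by rewrite max_l ?Oz // mule0.
by apply: sume_ge0 => l _; apply: mule_ge0; rewrite le_max lexx.
Qed.

Lemma c_ext_descent_ball (x d : vec) (r : R) : (0 < n)%N -> 0 < r ->
  lipschitz_near (c_ext g Gint) x ->
  (forall j b, exists e, 0 < e /\ forall z, eball x e z -> ~ Omega_ext g Gint z ->
     (clarke (c_ext g Gint) z (axis_step d r j b) < 0)%E) ->
  exists e, 0 < e /\ forall y w t, eball x e y -> eball d e w -> 0 < t < e ->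
    (c_ext g Gint (y + t *: w) <= c_ext g Gint y)%E.
Proof.
move=> n_gt0 r0 [eL [L [eL0 ext_lip]]] scq_ext.
have [eX [eX0 ext_clarke]] : exists e, 0 < e /\ forall p : 'I_n * bool,
    forall z, eball x e z -> ~ Omega_ext g Gint z ->
      (clarke (c_ext g Gint) z (axis_step d r p.1 p.2) < 0)%E.
  apply: exists_pos_forall => [p e1 e2 _ e12 scq z xz|[j b]]; last exact: scq_ext.
  by apply: scq; apply: lt_le_trans e12.
pose rho := Order.min eX eL; pose K := 2 * n%:R + norm1 d + 1.
pose eps := Order.min (r / n%:R) (Order.min 1 (rho / K)).
have rho0 : 0 < rho by rewrite lt_min eX0 eL0.
have [rho_eX rho_eL] : rho <= eX /\ rho <= eL by rewrite !ge_min !lexx orbT.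
have K0 : 0 < K by have := norm1_ge0 d; have := ler0n R n; rewrite /K; lra.
have [eps_r eps1 eps_K] : [/\ eps <= r / n%:R, eps <= 1 & eps <= rho / K].
  by rewrite !ge_min !lexx !orbT.
exists eps; split => [|y w t xy dw /andP [t0 te]].
  by rewrite !lt_min !divr_gt0 ?ltr0n ?ltr01.
have seg_ball s : 0 <= s <= t -> eball x rho (y + s *: w).
  move=> /andP [s0 st]; have s_eps : 0 <= s < eps by rewrite s0 (le_lt_trans st te).
  have := eball_segment eps1 xy dw s_eps.
  by rewrite /eball => /lt_le_trans; apply; rewrite -ler_pdivlMr.
apply: (segment_descent t0 _ seg_ball) => [u v xu xv|s s_pos lt_cs].
  by apply: ext_lip; [exact: lt_le_trans xu rho_eL | exact: lt_le_trans xv rho_eL].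
have s_seg : 0 <= s <= t by case/andP: s_pos => s0 ->; rewrite ltW.
have x_ys : eball x eX (y + s *: w) := lt_le_trans (seg_ball s s_seg) rho_eX.
have [e' [e'0 desc]] := clarke_lt0_descent_cube n_gt0 r0
  (fun j b => ext_clarke (j, b) _ x_ys (lt_c_ext_not_Omega_ext lt_cs)).
by exists e'; split => //; apply: desc (in_cube_enorm (ltW (lt_le_trans dw eps_r))).
Qed.

End Constraints.

Theorem mainTheorem7 (R : realType) (n m : nat)
  (g : 'I_m -> 'rV[R]_n -> \bar R) (Gint : {set 'I_m}) (x d : 'rV[R]_n) :
  Omega g Gint x -> SCQ g Gint x -> hypertangent g Gint x d ->
  exists e : R, 0 < e /\
    forall y w t, eball x e y -> eball d e w -> 0 < t < e ->
      (c_int g Gint (y + t *: w) <= c_int g Gint y)%E /\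
      (c_ext g Gint (y + t *: w) <= c_ext g Gint y)%E.
Proof.
case: n g x d => [|n] g x d.
  move=> _ _ _; exists 1; split => // y w t _ _ _.
  by rewrite [y + _]thinmx0 [y]thinmx0 lexx.
move=> _ [_ [[_ ext_lip] [scq_int scq_ext]]] /hypertangent_open [r [r0 ht_near]].
have r0' : 0 < r / 2 by rewrite divr_gt0.
have ht_step j b : hypertangent g Gint x (axis_step d (r / 2) j b).
  by apply: ht_near; rewrite norm1_axis_step_sub ?ltW //; lra.
have [eI [eI0 int_desc]] := clarke_lt0_descent_ball (ltn0Sn n) r0'
  (fun j b => scq_int _ (ht_step j b)).
have [eE [eE0 ext_desc]] := c_ext_descent_ball (ltn0Sn n) r0' ext_lip
  (fun j b => scq_ext _ (ht_step j b)).
exists (Order.min eI eE); split => [|y w t xy dw /andP [t0 te]].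
  by rewrite lt_min eI0 eE0.
have [eI_le eE_le] : Order.min eI eE <= eI /\ Order.min eI eE <= eE.
  by rewrite !ge_min !lexx orbT.
split; [apply: int_desc | apply: ext_desc]; rewrite ?t0 /=;
  by [apply: lt_le_trans xy _ | apply: lt_le_trans dw _ | apply: lt_le_trans te _].
Qed.
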